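(* There exist universal constants $c_1,c_2,c_3,c_4>0$ and $n_0$ such that for all $n\ge n_0$ and all integers $k$ with $2\le k\le n$, there is a unit-weight graph with at most $n$ vertices on which simultaneously: $c_1k\le\mathsf{OPT}\le c_2k$; $\mathsf{OPT}^{\mathsf{stable}}\ge c_3 n$; and every persuasive signaling scheme (with any finite signal space) has cost at least $c_4\min\{k\sqrt{n},\,n\}$.
   Context: Setting. For a graph on vertex set $V$ with $N=|V|$ vertices, $W$ is a symmetric $\{0,1\}$ matrix with $W_{v,v}=1$ and $W_{u,v}=1$ iff $u,v$ are adjacent (unit-weight graph). A vector $\theta\in\mathbb{R}_{\ge0}^V$ is feasible if $W\theta\ge\mathbf 1$ coordinatewise, and stable if it is feasible and for every $v$, $\theta_v=\min\{x\ge0: x+\sum_{v'\neq v}W_{v,v'}\theta_{v'}\ge1\}$. $\mathsf{OPT}=\min\{\|\theta\|_1:\theta\ge0\text{ feasible}\}$ and $\mathsf{OPT}^{\mathsf{stable}}=\min\{\|\theta\|_1:\theta\text{ stable}\}$. Signaling. There are $N$ agents; the type profile $t$ is a uniformly random bijection $[N]\to V$. A signaling scheme with finite signal space $\Sigma\subset[0,1]$ is a map $\varphi$ assigning to each bijection $t$ a distribution $\varphi(t)$ on $\Sigma^V$; given $t$, $s\sim\varphi(t)$ is drawn and agent $i$ privately receives $s_{t_i}$. For agent $i$, a signal $\theta\in\Sigma$ with $\Pr[s_{t_i}=\theta]>0$ and $x\ge0$, let $Q_i(x\mid\theta)=\mathbb{E}\big[x+\sum_{v'\neq t_i}W_{t_i,v'}s_{v'}\,\big|\,s_{t_i}=\theta\big]$.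 The scheme is persuasive if for every agent $i$ and every such $\theta$: $Q_i(\theta\mid\theta)\ge1$ and $\theta=\min\{x\ge0:Q_i(x\mid\theta)\ge1\}$. Its cost is $\mathbb{E}[\|s\|_1]$. *)

From HB Require Import structures.
From mathcomp Require Import all_boot all_order all_algebra.
From mathcomp Require Import fingroup perm.
From mathcomp Require Import reals.
Set Implicit Arguments. Unset Strict Implicit. Unset Printing Implicit Defensive.
Import Order.TTheory GRing.Theory Num.Theory.
Local Open Scope ring_scope.

Section Defs.
Variable R : realType.

Definition simple_graph (N : nat) (e : rel 'I_N) : Prop :=
  (forall u v, e u v = e v u) /\ (forall v, e v v = false).

Definition Wmat (N : nat) (e : rel 'I_N) (u v : 'I_N) : R :=
  if (u == v) || e u v then 1 else 0.

Definition l1norm (N : nat) (th : 'I_N -> R) : R := \sum_(v < N) `|th v|.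

Definition feasible (N : nat) (e : rel 'I_N) (th : 'I_N -> R) : Prop :=
  (forall v, 0 <= th v) /\
  (forall v, 1 <= \sum_(u < N) Wmat e v u * th u).

Definition stable (N : nat) (e : rel 'I_N) (th : 'I_N -> R) : Prop :=
  feasible e th /\
  forall v,
    let S := \sum_(u < N | u != v) Wmat e v u * th u in
    [/\ 0 <= th v, 1 <= th v + S &
        forall x : R, 0 <= x -> 1 <= x + S -> th v <= x].

(* The finite signal space Sigma is given as the range of
   sig : 'I_m -> R (values in [0,1]); a signal vector s in Sigma^V is encoded
   by s : {ffun 'I_N -> 'I_m} (vertex v receives value sig (s v)).
   phi t s is the probability that phi(t) outputs s; the type profile t is a
   bijection [N] -> V, i.e. t : {perm 'I_N}, drawn uniformly. *)
Definition valid_scheme (N m : nat) (sig : 'I_m -> R)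
    (phi : {perm 'I_N} -> {ffun 'I_N -> 'I_m} -> R) : Prop :=
  [/\ forall j, 0 <= sig j <= 1,
      forall t s, 0 <= phi t s &
      forall t, \sum_(s : {ffun 'I_N -> 'I_m}) phi t s = 1].

Definition jprob (N m : nat) (phi : {perm 'I_N} -> {ffun 'I_N -> 'I_m} -> R)
    (t : {perm 'I_N}) (s : {ffun 'I_N -> 'I_m}) : R :=
  (#|{perm 'I_N}|%:R)^-1 * phi t s.

Definition prsig (N m : nat) (sig : 'I_m -> R)
    (phi : {perm 'I_N} -> {ffun 'I_N -> 'I_m} -> R) (i : 'I_N) (th : R) : R :=
  \sum_(t : {perm 'I_N}) \sum_(s : {ffun 'I_N -> 'I_m}) (if sig (s (t i)) == th then jprob phi t s else 0).

Definition Qcond (N : nat) (e : rel 'I_N) (m : nat) (sig : 'I_m -> R)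
    (phi : {perm 'I_N} -> {ffun 'I_N -> 'I_m} -> R) (i : 'I_N) (x th : R) : R :=
  (\sum_(t : {perm 'I_N}) \sum_(s : {ffun 'I_N -> 'I_m})
     (if sig (s (t i)) == th then
        jprob phi t s *
          (x + \sum_(v' < N | v' != t i) Wmat e (t i) v' * sig (s v'))
      else 0)) / prsig sig phi i th.

Definition persuasive (N : nat) (e : rel 'I_N) (m : nat) (sig : 'I_m -> R)
    (phi : {perm 'I_N} -> {ffun 'I_N -> 'I_m} -> R) : Prop :=
  forall (i : 'I_N) (th : R), 0 < prsig sig phi i th ->
    [/\ 0 <= th, 1 <= Qcond e sig phi i th th &
        forall x : R, 0 <= x -> 1 <= Qcond e sig phi i x th -> th <= x].

Definition cost (N m : nat) (sig : 'I_m -> R)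
    (phi : {perm 'I_N} -> {ffun 'I_N -> 'I_m} -> R) : R :=
  \sum_(t : {perm 'I_N}) \sum_(s : {ffun 'I_N -> 'I_m}) jprob phi t s * \sum_(v < N) sig (s v).

End Defs.

From HB Require Import structures.
From mathcomp Require Import all_boot all_order all_algebra.
From mathcomp Require Import fingroup perm.
From mathcomp Require Import reals.
From mathcomp Require Import ring lra zify.
Set Implicit Arguments. Unset Strict Implicit. Unset Printing Implicit Defensive.
Import Order.TTheory GRing.Theory Num.Theory.
Local Open Scope ring_scope.

(* Take [p] hubs forming a clique, each with [m] pendant leaves, and [q] isolated
   vertices, [p + q = k].  Giving mass 1 to the hubs and isolated vertices is feasible,
   and each hub with its leaves and each isolated vertex needs mass 1, so OPT = k.  In a
   stable vector the row of a hub with positive mass is exactly 1, so the hubs carry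
   total mass at most 1 and the leaves must pay about [m (p - 1)], of order [n].

   For a persuasive scheme, the minimality condition says that, conditioned on any
   signal [th] of any agent, the expected slack [(W s)_v - 1] at the agent's vertex is
   nonnegative, and zero when [th > 0].  Hence [E[sum_v g(s_v) ((W s)_v - 1)] >= 0] for
   every weight [g] with [g 0 >= 0].  For the weight [g = 1] on [[0, 1/2]] and
   [g x = 1 - 8x/(1 - x + 1/m)] above, a vertex-by-vertex estimate gives
   [sum_v g(x_v) ((W x)_v - 1) <= 11 |x|_1 - q - min (p m / 8, p sqrt (p m))] for every
   [x] in [[0, 1]^V], which bounds the cost from below.  The parameters are
   [p = min (k, sqrt n / 8)], [m ~ n / (2 p)] if [2 k <= n], and [p = 0], [q = k]
   otherwise. *)

Lemma sumr_ord_const (R : pzSemiRingType) n (c : R) : \sum_(i < n) c = n%:R * c.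
Proof. by rewrite sumr_const card_ord mulr_natl. Qed.

Lemma least_shift_eq1 (R : realDomainType) (th c : R) : 1 <= th + c ->
  (forall x, 0 <= x -> 1 <= x + c -> th <= x) -> 0 < th -> th + c = 1.
Proof.
move=> th_c th_min th_gt0; apply/eqP; rewrite eq_le th_c andbT.
case: (lerP 0 (1 - c)) => [c_le1|c_gt1].
  by have := th_min _ c_le1; rewrite subrK lexx lerBrDr => ->.
have c_ge1 : 1 <= c by rewrite subr_lt0 in c_gt1; apply: ltW.
by have := th_min 0 (lexx 0); rewrite add0r c_ge1 => /(_ isT); rewrite leNgt th_gt0.
Qed.

Section Stability.
Variable R : realType.

Lemma Wmat_row_split N (e : rel 'I_N) (th : 'I_N -> R) v :
  \sum_u Wmat R e v u * th u = th v + \sum_(u < N | u != v) Wmat R e v u * th u.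
Proof. by rewrite (bigD1 v) //= /Wmat eqxx mul1r. Qed.

Lemma stable_row_eq1 N (e : rel 'I_N) (th : 'I_N -> R) v :
  stable e th -> 0 < th v -> \sum_u Wmat R e v u * th u = 1.
Proof.
by case=> _ /(_ v) [_ th_c th_min] th_gt0; rewrite Wmat_row_split least_shift_eq1.
Qed.

End Stability.

Section Persuasion.
Variables (R : realType) (N : nat) (e : rel 'I_N) (m : nat) (sig : 'I_m -> R).
Variable phi : {perm 'I_N} -> {ffun 'I_N -> 'I_m} -> R.
Hypothesis phi_valid : valid_scheme sig phi.

Local Notation profile := {ffun 'I_N -> 'I_m}.

Definition neighbour_load (s : profile) (v : 'I_N) : R :=
  \sum_(v' < N | v' != v) Wmat R e v v' * sig (s v').

Definition cond_sum (i : 'I_N) (th : R) (F : {perm 'I_N} -> profile -> R) : R :=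
  \sum_(t : {perm 'I_N}) \sum_(s : profile)
    (if sig (s (t i)) == th then jprob phi t s * F t s else 0).

Definition signal_slack (i : 'I_N) (th : R) : R :=
  cond_sum i th (fun t s => th + neighbour_load s (t i) - 1).

Lemma jprob_ge0 t s : 0 <= jprob phi t s.
Proof. by case: phi_valid => _ phi_ge0 _; rewrite mulr_ge0 ?invr_ge0 ?ler0n. Qed.

Lemma sum_jprob : \sum_(t : {perm 'I_N}) \sum_(s : profile) jprob phi t s = 1.
Proof.
case: phi_valid => _ _ phi_sum1.
under eq_bigr do rewrite -mulr_sumr phi_sum1 mulr1.
rewrite sumr_const -[X in _ *+ X]/#|{perm 'I_N}| -[_^-1 *+ _]mulr_natr.
rewrite mulVf // pnatr_eq0 -lt0n.
by apply/card_gt0P; exists 1%g.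
Qed.

Lemma prsig_cond_sum i th : prsig sig phi i th = cond_sum i th (fun _ _ => 1).
Proof.
by apply: eq_bigr => t _; apply: eq_bigr => s _; rewrite mulr1.
Qed.

Lemma cond_sum_shift i th x (F : {perm 'I_N} -> profile -> R) :
  cond_sum i th (fun t s => x + F t s) = x * prsig sig phi i th + cond_sum i th F.
Proof.
rewrite prsig_cond_sum /cond_sum mulr_sumr -big_split; apply: eq_bigr => t _.
rewrite mulr_sumr -big_split; apply: eq_bigr => s _.
by case: ifP => _ /=; rewrite ?mulr0 ?add0r // mulr1 mulrDr mulrC.
Qed.

Lemma cond_sum_eq0 i th F : prsig sig phi i th = 0 -> cond_sum i th F = 0.
Proof.
have w_ge0 (t : {perm 'I_N}) (s : profile) :
    0 <= (if sig (s (t i)) == th then jprob phi t s else 0).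
  by case: ifP => _; rewrite ?jprob_ge0.
move=> Pr0; apply: big1 => t _; apply: big1 => s _.
have wt0 : \sum_(s' : profile) (if sig (s' (t i)) == th then jprob phi t s' else 0) = 0.
  by apply: (psumr_eq0P _ Pr0) => // t' _; apply: sumr_ge0 => s' _.
have := psumr_eq0P (fun s' _ => w_ge0 t s') wt0 (i := s) isT.
by case: ifP => // _ ->; rewrite mul0r.
Qed.

Lemma persuasive_signal_slack i th : persuasive e sig phi ->
  0 <= signal_slack i th /\ (th != 0 -> signal_slack i th = 0).
Proof.
move=> phi_pers.
have slackE : signal_slack i th = th * prsig sig phi i th
    + cond_sum i th (fun t s => neighbour_load s (t i)) - prsig sig phi i th.
  rewrite -cond_sum_shift prsig_cond_sum /signal_slack /cond_sum -!sumrB.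
  apply: eq_bigr => t _; rewrite -sumrB; apply: eq_bigr => s _.
  by case: ifP => _ /=; rewrite ?subr0 // mulrBr !mulr1.
set Pr := prsig sig phi i th in slackE *.
have [Pr0|Pr_neq0] := eqVneq Pr 0.
  by rewrite slackE Pr0 cond_sum_eq0 // mulr0 !subr0 addr0.
have Pr_gt0 : 0 < Pr.
  by rewrite lt_def Pr_neq0 /Pr prsig_cond_sum; apply: sumr_ge0 => t _;
     apply: sumr_ge0 => s _; case: ifP => _; rewrite ?mulr1 ?jprob_ge0.
set c := cond_sum i th (fun t s => neighbour_load s (t i)) / Pr.
have QE x : Qcond e sig phi i x th = x + c.
  have := cond_sum_shift i th x (fun t s => neighbour_load s (t i)).
  by rewrite /cond_sum /neighbour_load /Qcond => ->; rewrite -/Pr mulrDl mulfK.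
have {}slackE : signal_slack i th = Pr * (th + c - 1).
  by rewrite slackE /c mulrBr mulr1 mulrDr [Pr * th]mulrC [Pr * (_ / Pr)]mulrC mulfVK.
have [th_ge0 th_c th_min] := phi_pers i th Pr_gt0; rewrite QE in th_c.
split; first by rewrite slackE mulr_ge0 ?subr_ge0 // ltW.
move=> th_neq0; rewrite slackE (least_shift_eq1 th_c) ?subrr ?mulr0 //.
  by move=> x x_ge0; rewrite -QE; apply: th_min.
by rewrite lt_def th_neq0.
Qed.

Lemma sum_signal_slack (g : R -> R) :
  \sum_i \sum_(th <- undup (codom sig)) g th * signal_slack i th =
  \sum_(t : {perm 'I_N}) \sum_(s : profile) jprob phi t s *
    \sum_v g (sig (s v)) * (\sum_u Wmat R e v u * sig (s u) - 1).
Proof.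
have slack_i i : \sum_(th <- undup (codom sig)) g th * signal_slack i th =
    \sum_(t : {perm 'I_N}) \sum_(s : profile) jprob phi t s *
      (g (sig (s (t i))) * (\sum_u Wmat R e (t i) u * sig (s u) - 1)).
  under eq_bigr do rewrite mulr_sumr.
  rewrite exchange_big /=; apply: eq_bigr => t _.
  under eq_bigr do rewrite mulr_sumr.
  rewrite exchange_big /=; apply: eq_bigr => s _.
  rewrite (big_rem (sig (s (t i)))) ?mem_undup ?codom_f //= eqxx big_seq big1.
    by rewrite addr0 Wmat_row_split mulrCA.
  move=> th; rewrite mem_rem_uniq ?undup_uniq // inE => /andP[th_neq _].
  by rewrite eq_sym (negbTE th_neq) mulr0.
under eq_bigr do rewrite slack_i.
rewrite exchange_big; apply: eq_bigr => t _; rewrite exchange_big; apply: eq_bigr => s _.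
by rewrite -mulr_sumr [in RHS](reindex_inj (@perm_inj _ t)).
Qed.

Lemma persuasive_weighted_slack_ge0 (g : R -> R) : persuasive e sig phi -> 0 <= g 0 ->
  0 <= \sum_(t : {perm 'I_N}) \sum_(s : profile) jprob phi t s *
         \sum_v g (sig (s v)) * (\sum_u Wmat R e v u * sig (s u) - 1).
Proof.
move=> phi_pers g0_ge0; rewrite -sum_signal_slack.
apply: sumr_ge0 => i _; apply: sumr_ge0 => th _.
have [slack_ge0 slack_eq0] := persuasive_signal_slack i th phi_pers.
have [th0|th_neq0] := eqVneq th 0; last by rewrite slack_eq0 ?mulr0.
by rewrite th0 in slack_ge0 *; apply: mulr_ge0.
Qed.

Lemma persuasive_cost_ge (g : R -> R) (C b : R) : persuasive e sig phi -> 0 <= g 0 ->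
  (forall x : 'I_N -> R, (forall v, 0 <= x v <= 1) ->
     \sum_v g (x v) * (\sum_u Wmat R e v u * x u - 1) <= C * \sum_v x v - b) ->
  b <= C * cost sig phi.
Proof.
move=> phi_pers g0_ge0 slack_le; rewrite -subr_ge0.
apply: le_trans (persuasive_weighted_slack_ge0 phi_pers g0_ge0) _.
have -> : C * cost sig phi - b = \sum_(t : {perm 'I_N}) \sum_(s : profile)
    jprob phi t s * (C * \sum_v sig (s v) - b).
  rewrite /cost -[b in LHS]mulr1 -sum_jprob mulr_sumr mulr_sumr -sumrB.
  apply: eq_bigr => t _; rewrite mulr_sumr mulr_sumr -sumrB; apply: eq_bigr => s _.
  by rewrite mulrBr mulrCA [b * _]mulrC.
apply: ler_sum => t _; apply: ler_sum => s _; rewrite ler_wpM2l ?jprob_ge0 //.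
by apply: slack_le => v; case: phi_valid.
Qed.

End Persuasion.

Section EnumGraph.
Variables (R : realType) (T : finType) (r : rel T).

Definition enum_graph : rel 'I_#|T| := fun u v => r (enum_val u) (enum_val v).

Definition Wrel (x y : T) : R := if (x == y) || r x y then 1 else 0.

Definition Wrow (f : T -> R) (x : T) : R := \sum_y Wrel x y * f y.

Lemma enum_graph_simple : symmetric r -> irreflexive r -> simple_graph enum_graph.
Proof. by move=> r_sym r_irr; split=> [u v|v]; [apply: r_sym | apply: r_irr]. Qed.

Lemma sum_enum_rank (F : 'I_#|T| -> R) : \sum_u F u = \sum_x F (enum_rank x).
Proof.
rewrite (reindex (@enum_rank T)) //.
by exists enum_val => x _; [apply: enum_rankK | apply: enum_valK].
Qed.

Lemma enum_graph_row (th : 'I_#|T| -> R) v :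
  \sum_u Wmat R enum_graph v u * th u = Wrow (th \o enum_rank) (enum_val v).
Proof.
rewrite sum_enum_rank; apply: eq_bigr => x _.
by rewrite /Wmat /enum_graph -{1}(enum_valK v) (inj_eq (can_inj enum_rankK)) enum_rankK.
Qed.

Lemma l1norm_enum_rank (th : 'I_#|T| -> R) : (forall v, 0 <= th v) ->
  l1norm th = \sum_x th (enum_rank x).
Proof.
by move=> th_ge0; rewrite /l1norm sum_enum_rank; apply: eq_bigr => x _; rewrite ger0_norm.
Qed.

Lemma feasible_enum_graph (th : 'I_#|T| -> R) : feasible enum_graph th ->
  (forall x, 0 <= th (enum_rank x)) /\ (forall x, 1 <= Wrow (th \o enum_rank) x).
Proof.
case=> th_ge0 th_cov; split=> // x.
by have := th_cov (enum_rank x); rewrite enum_graph_row enum_rankK.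
Qed.

Lemma feasible_enum_graph_val (f : T -> R) : (forall x, 0 <= f x) ->
  (forall x, 1 <= Wrow f x) -> feasible enum_graph (f \o enum_val).
Proof.
move=> f_ge0 f_cov; split=> v; first exact: f_ge0.
rewrite enum_graph_row (_ : Wrow _ _ = Wrow f (enum_val v)) //.
by apply: eq_bigr => y _; rewrite /= enum_rankK.
Qed.

Lemma stable_enum_graph_row (th : 'I_#|T| -> R) x : stable enum_graph th ->
  0 < th (enum_rank x) -> Wrow (th \o enum_rank) x = 1.
Proof. by move=> th_st /(stable_row_eq1 th_st); rewrite enum_graph_row enum_rankK. Qed.

End EnumGraph.

Notation hub_vertex p m q := (('I_p + 'I_p * 'I_m) + 'I_q)%type.
Notation Hub i := (inl (inl i)).
Notation Leaf i l := (inl (inr (i, l))).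
Notation Iso z := (inr z).

Definition hub_adj (p m q : nat) : rel (hub_vertex p m q) := fun x y =>
  match x, y with
  | Hub i, Hub j => i != j
  | Hub i, Leaf j _ | Leaf i _, Hub j => i == j
  | _, _ => false
  end.
Arguments hub_adj : clear implicits.

Section HubGraph.
Variables (R : realType) (p m q : nat).
Local Notation V := (hub_vertex p m q).

Lemma hub_adj_sym : symmetric (hub_adj p m q).
Proof. by move=> [[i|[i l]]|z] [[j|[j l']]|z'] //=; rewrite eq_sym. Qed.

Lemma hub_adj_irr : irreflexive (hub_adj p m q).
Proof. by move=> [[i|[i l]]|z] //=; rewrite eqxx. Qed.

Lemma card_hub_vertex : #|{: V}| = (p + p * m + q)%N.
Proof. by rewrite !card_sum card_prod !card_ord. Qed.

Lemma sum_hub_vertex (F : V -> R) :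
  \sum_x F x = \sum_i F (Hub i) + \sum_i \sum_l F (Leaf i l) + \sum_z F (Iso z).
Proof. by rewrite !big_sumType /= pair_bigA; congr (_ + _ + _); apply: eq_bigr => -[]. Qed.

Lemma eq_leaf i l j l' : (Leaf i l == Leaf j l' :> V) = (i == j) && (l == l').
Proof. by []. Qed.

Lemma eq_iso z z' : (Iso z == Iso z' :> V) = (z == z').
Proof. by []. Qed.

Local Notation row := (@Wrow R V (hub_adj p m q)).

Lemma row_hub (f : V -> R) i :
  row f (Hub i) = \sum_j f (Hub j) + \sum_l f (Leaf i l).
Proof.
rewrite /Wrow sum_hub_vertex [\sum_(z < q) _]big1 ?addr0 => [|z _]; last first.
  by rewrite /Wrel /= mul0r.
congr (_ + _); first by apply: eq_bigr => j _; rewrite /Wrel /= orbN mul1r.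
rewrite (bigD1 i) //= [X in _ + X]big1 ?addr0 => [|j j_neq_i].
  by apply: eq_bigr => l _; rewrite /Wrel /= eqxx mul1r.
by apply: big1 => l _; rewrite /Wrel /= eq_sym (negbTE j_neq_i) mul0r.
Qed.

Lemma row_leaf (f : V -> R) i l :
  row f (Leaf i l) = f (Hub i) + f (Leaf i l).
Proof.
rewrite /Wrow sum_hub_vertex [\sum_(z < q) _]big1 ?addr0 => [|z _]; last first.
  by rewrite /Wrel /= mul0r.
congr (_ + _).
  rewrite (bigD1 i) //= [X in _ + X]big1 ?addr0 => [|j j_neq_i].
    by rewrite /Wrel /= eqxx mul1r.
  by rewrite /Wrel /= eq_sym (negbTE j_neq_i) mul0r.
rewrite (bigD1 i) //= [X in _ + X]big1 ?addr0 => [|j j_neq_i].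
  rewrite (bigD1 l) //= [X in _ + X]big1 ?addr0 => [|l' l'_neq_l].
    by rewrite /Wrel /= !eqxx mul1r.
  by rewrite /Wrel /= eq_leaf eqxx eq_sym (negbTE l'_neq_l) mul0r.
apply: big1 => l' _.
by rewrite /Wrel /= eq_leaf eq_sym (negbTE j_neq_i) mul0r.
Qed.

Lemma row_iso (f : V -> R) z : row f (Iso z) = f (Iso z).
Proof.
rewrite /Wrow sum_hub_vertex [\sum_(i < p) _]big1 => [|i _]; last by rewrite /Wrel /= mul0r.
rewrite [\sum_(i < p) _]big1 ?add0r => [|i _]; last first.
  by apply: big1 => l _; rewrite /Wrel /= mul0r.
rewrite (bigD1 z) //= [X in _ + X]big1 ?addr0 => [|z' z'_neq_z].
  by rewrite /Wrel /= eqxx mul1r.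
by rewrite /Wrel /= eq_iso eq_sym (negbTE z'_neq_z) mul0r.
Qed.

End HubGraph.

Section HubGraphBounds.
Variables (R : realType) (p m q : nat).
Local Notation V := (hub_vertex p m q).
Local Notation G := (enum_graph (hub_adj p m q)).
Local Notation row := (@Wrow R V (hub_adj p m q)).

Lemma hub_graph_opt_ge (th : 'I_#|{: V}| -> R) : (0 < m)%N -> feasible G th ->
  (p + q)%:R <= l1norm th.
Proof.
move=> m_gt0 th_feas; have /feasible_enum_graph[th_ge0 th_cov] := th_feas.
set f := th \o enum_rank in th_cov.
rewrite l1norm_enum_rank; last by case: th_feas.
rewrite sum_hub_vertex natrD -big_split /= lerD //.
  rewrite -[p%:R]mulr1 -sumr_ord_const; apply: ler_sum => i _.
  have := th_cov (Leaf i (Ordinal m_gt0)); rewrite row_leaf => /le_trans; apply.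
  rewrite lerD2l (bigD1 (Ordinal m_gt0)) //= lerDl.
  by apply: sumr_ge0 => l _; apply: th_ge0.
rewrite -[q%:R]mulr1 -sumr_ord_const; apply: ler_sum => z _.
by have := th_cov (Iso z); rewrite row_iso.
Qed.

Definition hub_cover (x : V) : R := if x is Leaf _ _ then 0 else 1.

Lemma hub_graph_opt_le :
  exists th : 'I_#|{: V}| -> R, feasible G th /\ l1norm th <= (p + q)%:R.
Proof.
have cover_ge0 x : 0 <= hub_cover x by case: x => [[i|[i l]]|z].
exists (hub_cover \o enum_val); split.
  apply: feasible_enum_graph_val => // x.
  case: x => [[i|[i l]]|z]; rewrite ?row_leaf ?row_iso //= ?addr0 //.
  rewrite row_hub (bigD1 i) //= -addrA lerDl.
  by rewrite addr_ge0 //; apply: sumr_ge0.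
rewrite l1norm_enum_rank => [|v]; last exact: cover_ge0.
rewrite sum_hub_vertex natrD -[p%:R]mulr1 -[q%:R]mulr1 -!sumr_ord_const.
rewrite [X in _ + X + _]big1 ?addr0 => [|i _].
  by apply: lerD; apply: ler_sum => x _; rewrite /= enum_rankK.
by apply: big1 => l _; rewrite /= enum_rankK.
Qed.

(* The row of a hub with positive mass is exactly 1, so the hubs carry total mass at
   most 1, and each leaf [Leaf i l] must make up for the deficit of its hub. *)
Lemma hub_graph_stable_ge (th : 'I_#|{: V}| -> R) : stable G th ->
  m%:R * (p%:R - 1) + q%:R <= l1norm th.
Proof.
move=> th_st; have /feasible_enum_graph[th_ge0 th_cov] := th_st.1.
set f := th \o enum_rank in th_cov.
have f_sat x : 0 < f x -> row f x = 1 by apply: stable_enum_graph_row.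
rewrite l1norm_enum_rank; last by case: th_st.1.
rewrite sum_hub_vertex lerD //; last first.
  rewrite -[q%:R]mulr1 -sumr_ord_const; apply: ler_sum => z _.
  by have := th_cov (Iso z); rewrite row_iso.
set A := \sum_i f (Hub i).
have A_le1 : A <= 1.
  have [i /= fi_gt0|all0] := pickP (fun i => 0 < f (Hub i)).
    have := f_sat _ fi_gt0; rewrite row_hub -/A => <-.
    by rewrite lerDl; apply: sumr_ge0 => l _; apply: th_ge0.
  apply: le_trans ler01; rewrite -(mulr0 p%:R) -sumr_ord_const; apply: ler_sum => i _.
  by rewrite leNgt all0.
apply: (@le_trans _ _ (\sum_i \sum_l f (Leaf i l))); last first.
  by rewrite lerDr; apply: sumr_ge0 => i _; apply: th_ge0.
apply: (@le_trans _ _ (\sum_(i < p) m%:R * (1 - f (Hub i)))).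
  by rewrite -mulr_sumr sumrB sumr_ord_const mulr1 ler_wpM2l ?ler0n // lerD2l lerN2.
apply: ler_sum => i _; rewrite -[m%:R]mulr1 -sumr_ord_const mulr_suml.
apply: ler_sum => l _; rewrite mul1r lerBlDl.
by have := th_cov (Leaf i l); rewrite row_leaf.
Qed.

End HubGraphBounds.

(* AM-GM: [y^2/(2u) + u >= sqrt 2 * y >= y + 1] when [y >= 4]. *)
Lemma le_sqr_div_add (R : realFieldType) (y u : R) : 0 < u -> 4 <= y ->
  y <= y ^+ 2 / (2 * u) + u - 1.
Proof.
move=> u_gt0 y_ge4; rewrite -subr_ge0.
have -> : y ^+ 2 / (2 * u) + u - 1 - y = (y ^+ 2 / 2 + u ^+ 2 - u - y * u) / u.
  by field; rewrite gt_eqF.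
rewrite divr_ge0 ?ltW //.
by have := sqr_ge0 (2 * u - y - 1); nra.
Qed.

Definition weight_drop (R : realType) (m : nat) (x : R) : R := 8 * x / (1 - x + m%:R^-1).
Definition weight (R : realType) (m : nat) (x : R) : R :=
  if x <= 2^-1 then 1 else 1 - weight_drop m x.

(* Lower bound on what hub [i] with signal [a], together with its leaves, contributes to
   [11 * \sum_v x v - \sum_v weight (x v) * (row x v - 1)], the hubs carrying mass [A]. *)
Definition hub_term (R : realType) (m : nat) (a A : R) : R :=
  11 * a - weight m a * (A - 1) + m%:R * (1 - a).

Section Weight.
Variables (R : realType) (m : nat).
Hypothesis m_gt0 : (0 < m)%N.

Lemma weight_drop_den_gt0 (x : R) : x <= 1 -> 0 < 1 - x + m%:R^-1.
Proof.
have : 0 < (m%:R : R)^-1 by rewrite invr_gt0 ltr0n.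
lra.
Qed.

Lemma weight_drop_ge0 (x : R) : 0 <= x <= 1 -> 0 <= weight_drop m x.
Proof.
move=> /andP[x_ge0 x_le1]; apply: divr_ge0; first lra.
exact/ltW/weight_drop_den_gt0.
Qed.

Lemma weight_drop_mul_le (x : R) : 0 <= x <= 1 -> weight_drop m x * (1 - x) <= 8 * x.
Proof.
move=> /andP[x_ge0 x_le1]; rewrite /weight_drop mulrAC ler_pdivrMr ?weight_drop_den_gt0 //.
have : 0 < (m%:R : R)^-1 by rewrite invr_gt0 ltr0n.
nra.
Qed.

Lemma weight_drop_ge (x : R) : 2^-1 < x <= 1 ->
  4 / (1 - x + m%:R^-1) <= weight_drop m x.
Proof.
move=> /andP[x_gt x_le1]; rewrite /weight_drop ler_pM2r; first lra.
by rewrite invr_gt0 weight_drop_den_gt0.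
Qed.

Lemma weight_drop_ge2 (x : R) : 2^-1 < x <= 1 -> 2 <= weight_drop m x.
Proof.
move=> x_range; apply: le_trans (weight_drop_ge x_range).
case/andP: x_range => x_gt x_le1.
rewrite ler_pdivlMr ?weight_drop_den_gt0 //.
have : (m%:R : R)^-1 <= 1 by rewrite invf_le1 ?ler1n ?ltr0n.
lra.
Qed.

Lemma weight_le1 (x : R) : 0 <= x <= 1 -> weight m x <= 1.
Proof.
by move=> x_range; rewrite /weight; case: ifP => // _; have := weight_drop_ge0 x_range; lra.
Qed.

Lemma weight0 : weight m (0 : R) = 1.
Proof. by rewrite /weight invr_ge0 ler0n. Qed.

Lemma leaf_slack_bound (x a : R) : 0 <= x <= 1 -> 0 <= a <= 1 ->
  1 - a <= 11 * x - weight m x * (a + x - 1) - weight m a * x.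
Proof.
move=> x_range a_range.
have ga_x : weight m a * x <= x.
  by rewrite ler_piMl ?weight_le1 //; case/andP: x_range.
rewrite [weight m x]/weight; case: ifP => x_le.
  by move: x_range a_range => /andP[? ?] /andP[? ?]; lra.
have := weight_drop_ge0 x_range; have := weight_drop_mul_le x_range.
move: x_range a_range => /andP[x_ge0 x_le1] /andP[a_ge0 a_le1] d_mul d_ge0.
have : - (weight_drop m x * (1 - x)) <= weight_drop m x * (a + x - 1).
  by rewrite -mulrN ler_wpM2l //; lra.
lra.
Qed.

Lemma iso_slack_bound (x : R) : 0 <= x <= 1 -> 1 <= 11 * x - weight m x * (x - 1).
Proof.
move=> x_range; rewrite /weight; case: ifP => x_le.
  by case/andP: x_range; lra.
have := weight_drop_mul_le x_range; case/andP: x_range => x_ge0 x_le1.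
have -> : (1 - weight_drop m x) * (x - 1) = (x - 1) + weight_drop m x * (1 - x) by ring.
lra.
Qed.

Lemma hub_term_ge_half p (a A : R) : 0 <= a <= 1 -> a <= A -> A <= p%:R ->
  4 * p%:R <= m%:R :> R -> m%:R * (1 - a) / 2 <= hub_term m a A.
Proof.
move=> a_range a_le_A A_le_p p_le_m; rewrite /hub_term /weight.
have m_ge0 : (0 : R) <= m%:R by rewrite ler0n.
case: ifP => a_le.
  have : m%:R / 2 <= m%:R * (1 - a) :> R by rewrite ler_pM2l ?ltr0n //; lra.
  by case/andP: a_range; lra.
have a_gt : 2^-1 < a <= 1 by case/andP: a_range => _ ->; rewrite andbT ltNge a_le.
have := weight_drop_ge2 a_gt; have := weight_drop_mul_le a_range.
have m_1a : 0 <= m%:R * (1 - a) by rewrite mulr_ge0 //; case/andP: a_range; lra.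
case/andP: a_range => a_ge0 a_le1 d_mul d_ge2.
case: (lerP 1 A) => A_ge1.
  have : 0 <= (weight_drop m a - 1) * (A - 1) by rewrite mulr_ge0 //; lra.
  lra.
have : - (weight_drop m a * (1 - a)) <= weight_drop m a * (A - 1).
  by rewrite -mulrN ler_wpM2l //; lra.
lra.
Qed.

(* For a heavy hub, [weight] is about [-4/(1 - a + 1/m)], which trades off against the
   [m (1 - a)] leaf contribution at the level [sqrt (p m)]. *)
Lemma hub_term_ge p (a A : R) : 0 <= a <= 1 -> a <= A -> A <= p%:R ->
  4 * p%:R <= m%:R :> R -> p%:R / 4 <= A - 1 -> 16 <= p%:R * m%:R :> R ->
  Num.min (m%:R / 4) (Num.sqrt (p%:R * m%:R)) <= hub_term m a A.
Proof.
move=> a_range a_le_A A_le_p p_le_m A_big pm_ge16.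
have half := hub_term_ge_half a_range a_le_A A_le_p p_le_m.
rewrite ge_min; apply/orP; case: (lerP a 2^-1) => a_le; [left | right].
  apply: le_trans half.
  have : m%:R / 2 <= m%:R * (1 - a) :> R.
    by rewrite ler_pM2l ?ltr0n //; case/andP: a_range; lra.
  lra.
have a_gt : 2^-1 < a <= 1 by rewrite a_le; case/andP: a_range.
have d_ge2 := weight_drop_ge2 a_gt; have d_ge := weight_drop_ge a_gt.
have den_gt0 := weight_drop_den_gt0 (proj2 (andP a_range)).
set den := 1 - a + m%:R^-1 in d_ge den_gt0.
set d := weight_drop m a in d_ge2 d_ge.
set y := Num.sqrt (p%:R * m%:R).
have pm_ge0 : (0 : R) <= p%:R * m%:R by rewrite mulr_ge0 ?ler0n.
have y2 : y ^+ 2 = p%:R * m%:R by rewrite sqr_sqrtr.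
have y_ge0 : 0 <= y by apply: sqrtr_ge0.
have y_ge4 : 4 <= y by nra.
have m_pos : (0 : R) < m%:R by rewrite ltr0n.
set u := m%:R * den.
have u_gt0 : 0 < u by rewrite mulr_gt0.
have uE : m%:R * (1 - a) = u - 1 by rewrite /u /den; field; rewrite gt_eqF.
have p_ge0 : (0 : R) <= p%:R by rewrite ler0n.
have k1 : (d / 2) * (p%:R / 4) <= (d - 1) * (A - 1) by apply: ler_pM; lra.
have k2 : (4 / den / 2) * (p%:R / 4) <= (d / 2) * (p%:R / 4) by apply: ler_wpM2r; lra.
have k3 : (4 / den / 2) * (p%:R / 4) = y ^+ 2 / (2 * u).
  by rewrite y2 /u; field; rewrite ?gt_eqF.
have -> : hub_term m a A = 11 * a + (d - 1) * (A - 1) + m%:R * (1 - a).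
  rewrite /hub_term /weight ifF -/d; first ring.
  by apply/negbTE; rewrite -ltNge.
have := le_sqr_div_add u_gt0 y_ge4.
by rewrite uE; case/andP: a_range; lra.
Qed.

Lemma hub_term_sum_ge p (a : 'I_p -> R) : (2 <= p)%N -> 4 * p%:R <= m%:R :> R ->
  (forall i, 0 <= a i <= 1) ->
  Num.min (p%:R * m%:R / 8) (p%:R * Num.sqrt (p%:R * m%:R)) <=
    \sum_i hub_term m (a i) (\sum_j a j).
Proof.
move=> p_ge2 p_le_m a_range; set A := \sum_j a j.
have A_le_p : A <= p%:R.
  by rewrite -[p%:R]mulr1 -sumr_ord_const; apply: ler_sum => i _; case/andP: (a_range i).
have a_le_A i : a i <= A.
  rewrite /A (bigD1 i) //= lerDl; apply: sumr_ge0 => j _; by case/andP: (a_range j).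
have p_ge2R : (2 : R) <= p%:R by rewrite (ler_nat R 2 p).
have m_ge0 : (0 : R) <= m%:R by rewrite ler0n.
case: (lerP A (3 * p%:R / 4)) => A_le.
  rewrite ge_min; apply/orP; left.
  apply: (@le_trans _ _ (\sum_i m%:R * (1 - a i) / 2)); last first.
    by apply: ler_sum => i _; apply: hub_term_ge_half (a_range i) (a_le_A i) A_le_p p_le_m.
  rewrite -mulr_suml -mulr_sumr sumrB sumr_ord_const mulr1 -/A.
  nra.
have A_big : p%:R / 4 <= A - 1 by lra.
have pm_ge16 : 16 <= p%:R * m%:R :> R by nra.
apply: (@le_trans _ _ (\sum_(i < p) Num.min (m%:R / 4) (Num.sqrt (p%:R * m%:R)))).
  rewrite sumr_ord_const; case: (leP (m%:R / 4) (Num.sqrt (p%:R * m%:R))) => m_le.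
    by rewrite ge_min; apply/orP; left; nra.
  by rewrite ge_min lexx orbT.
apply: ler_sum => i _.
exact: hub_term_ge (a_range i) (a_le_A i) A_le_p p_le_m A_big pm_ge16.
Qed.

End Weight.

Section HubGraphPersuasion.
Variables (R : realType) (p m q : nat) (B : R).
Hypothesis m_gt0 : (0 < m)%N.
Hypothesis hubs_ge : forall a : 'I_p -> R, (forall i, 0 <= a i <= 1) ->
  B <= \sum_i hub_term m (a i) (\sum_j a j).
Local Notation V := (hub_vertex p m q).
Local Notation row := (@Wrow R V (hub_adj p m q)).

Lemma hub_graph_weighted_slack_le (f : V -> R) : (forall x, 0 <= f x <= 1) ->
  q%:R + B <= \sum_x (11 * f x - weight m (f x) * (row f x - 1)).
Proof.
move=> f_range; rewrite sum_hub_vertex addrC lerD //; last first.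
  rewrite -[q%:R]mulr1 -sumr_ord_const; apply: ler_sum => z _.
  by rewrite row_iso; apply: iso_slack_bound => //; apply: f_range.
apply: le_trans (hubs_ge (fun i => f_range (Hub i))) _.
rewrite -big_split /=; apply: ler_sum => i _; rewrite row_hub.
set a := f (Hub i); set A := \sum_j f (Hub j); set X := \sum_l f (Leaf i l).
have leaves_ge : m%:R * (1 - a) <= \sum_l (11 * f (Leaf i l)
    - weight m (f (Leaf i l)) * (row f (Leaf i l) - 1)) - weight m a * X.
  rewrite /X mulr_sumr -sumrB -[m%:R * _]sumr_ord_const; apply: ler_sum => l _.
  by rewrite row_leaf; apply: leaf_slack_bound => //; apply: f_range.
rewrite /hub_term; lra.
Qed.

Lemma hub_graph_cost_ge M (sig : 'I_M -> R) phi : valid_scheme sig phi ->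
  persuasive (enum_graph (hub_adj p m q)) sig phi -> q%:R + B <= 11 * cost sig phi.
Proof.
move=> phi_valid phi_pers.
apply: (persuasive_cost_ge (g := weight m) phi_valid phi_pers); first by rewrite weight0.
move=> x x_range.
have := hub_graph_weighted_slack_le (f := x \o enum_rank) (fun y => x_range _).
have -> : \sum_v weight m (x v) * (\sum_u Wmat R (enum_graph (hub_adj p m q)) v u * x u - 1)
    = \sum_y weight m (x (enum_rank y)) * (row (x \o enum_rank) y - 1).
  by rewrite sum_enum_rank; apply: eq_bigr => y _; rewrite enum_graph_row enum_rankK.
rewrite sumrB -mulr_sumr (sum_enum_rank x); lra.
Qed.

End HubGraphPersuasion.

Lemma exists_nat_sqrt n : exists s, (s * s <= n < s.+1 * s.+1)%N.
Proof.
elim: n => [|n [s /andP[s_le s_gt]]]; first by exists 0%N.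
case: (ltnP n.+1 (s.+1 * s.+1)) => n_lt; first by exists s; rewrite n_lt andbT; lia.
by exists s.+1; apply/andP; split; lia.
Qed.

Lemma hub_parameters n k : (256 <= n)%N -> (2 <= k)%N -> (2 * k <= n)%N ->
  exists p m, [/\ (2 <= p <= k)%N, (4 * p <= m)%N, (p + p * m + (k - p) <= n)%N,
    (n <= 4 * (p * m))%N & (p = k \/ n < 256 * p * p)%N].
Proof.
move=> n_ge k_ge2 k_le.
have [s /andP[s_le s_gt]] := exists_nat_sqrt (n %/ 64).
have n_ge_s : (64 * (s * s) <= n)%N by rewrite mulnC -leq_divRL.
have n_lt_s : (n < 64 * (s.+1 * s.+1))%N by rewrite mulnC -ltn_divLR.
pose p := minn k s.
have p_range : (2 <= p <= k)%N by rewrite /p geq_minl leq_min k_ge2 andbT; nia.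
have p_case : (p = k \/ n < 256 * p * p)%N.
  by rewrite /p; case: (leqP k s) => ks; [left | right]; nia.
have p_le_s : (p <= s)%N by rewrite geq_minr.
pose d := (n %/ (2 * p))%N.
have d_le : (d * (2 * p) <= n)%N by apply: leq_trunc_div.
have d_gt : (n < d.+1 * (2 * p))%N by apply: ltn_ceil; lia.
have d_ge : (32 * p <= d)%N by rewrite leq_divRL; nia.
by exists p, d.-1; split => //; nia.
Qed.

Lemma hub_bound_ge (R : realType) (n k p m : nat) :
  (n <= 4 * (p * m))%N -> (p = k \/ n < 256 * p * p)%N ->
  Num.min (k%:R * Num.sqrt n%:R) n%:R / 32
    <= Num.min (p%:R * m%:R / 8) (p%:R * Num.sqrt (p%:R * m%:R)) :> R.
Proof.
move=> n_le p_case.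
have n_leR : n%:R <= 4 * (p%:R * m%:R) :> R by rewrite -!natrM ler_nat.
have p_ge0 : (0 : R) <= p%:R by rewrite ler0n.
have pm_ge0 : (0 : R) <= p%:R * m%:R by rewrite mulr_ge0 ?ler0n.
set s := Num.sqrt (n%:R : R); set t := Num.sqrt (p%:R * m%:R : R).
have s2 : s ^+ 2 = n%:R by rewrite sqr_sqrtr ?ler0n.
have t2 : t ^+ 2 = p%:R * m%:R by rewrite sqr_sqrtr.
have s_ge0 : 0 <= s by apply: sqrtr_ge0.
have t_ge0 : 0 <= t by apply: sqrtr_ge0.
have s_le_t : s / 2 <= t by nra.
have min_le_n : Num.min (k%:R * s) n%:R <= n%:R by rewrite ge_min lexx orbT.
have min_le_ks : Num.min (k%:R * s) n%:R <= k%:R * s by rewrite ge_min lexx.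
rewrite le_min; apply/andP; split; first lra.
have ps_le_pt : p%:R * (s / 2) <= p%:R * t by rewrite ler_wpM2l.
have ps_ge0 : 0 <= p%:R * s by rewrite mulr_ge0.
case: p_case => [p_k|n_lt]; first by rewrite -p_k in min_le_ks *; lra.
have n_ltR : n%:R < 256 * p%:R * p%:R :> R by rewrite -!natrM ltr_nat.
have : s <= 16 * p%:R by nra.
nra.
Qed.

Definition lower_bound_instance (R : realType) (c1 c2 c3 c4 : R) (n k : nat) : Prop :=
  exists (N : nat) (e : rel 'I_N),
    (N <= n)%N /\ simple_graph e /\
    [/\ (forall th : 'I_N -> R, feasible e th -> c1 * k%:R <= l1norm th),
        (exists th : 'I_N -> R, feasible e th /\ l1norm th <= c2 * k%:R),
        (forall th : 'I_N -> R, stable e th -> c3 * n%:R <= l1norm th) &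
        (forall (m : nat) (sig : 'I_m -> R)
                (phi : {perm 'I_N} -> {ffun 'I_N -> 'I_m} -> R),
            valid_scheme sig phi -> persuasive e sig phi ->
            c4 * Num.min (k%:R * Num.sqrt (n%:R)) n%:R <= cost sig phi)].

Lemma hub_graph_instance (R : realType) (n k p m q : nat) (c3 c4 B : R) :
  (0 < m)%N -> (p + q)%N = k -> (p + p * m + q <= n)%N ->
  c3 * n%:R <= m%:R * (p%:R - 1) + q%:R ->
  11 * (c4 * Num.min (k%:R * Num.sqrt n%:R) n%:R) <= q%:R + B ->
  (forall a : 'I_p -> R, (forall i, 0 <= a i <= 1) ->
     B <= \sum_i hub_term m (a i) (\sum_j a j)) ->
  lower_bound_instance 1 1 c3 c4 n k.
Proof.
move=> m_gt0 pq_k N_le stable_ge cost_ge hubs_ge.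
exists #|{: hub_vertex p m q}|, (enum_graph (hub_adj p m q)).
split; first by rewrite card_hub_vertex.
split; first exact: enum_graph_simple (@hub_adj_sym p m q) (@hub_adj_irr p m q).
split.
- by move=> th; rewrite -pq_k mul1r; apply: hub_graph_opt_ge.
- by rewrite -pq_k mul1r; apply: hub_graph_opt_le.
- by move=> th /hub_graph_stable_ge; apply: le_trans.
- move=> M sig phi phi_valid phi_pers.
  by have := hub_graph_cost_ge m_gt0 hubs_ge phi_valid phi_pers; lra.
Qed.

Lemma dense_instance (R : realType) (n k : nat) :
  (256 <= n)%N -> (2 <= k)%N -> (2 * k <= n)%N ->
  lower_bound_instance (1 : R) 1 8^-1 352^-1 n k.
Proof.
move=> n_ge k_ge2 k_le.
have [p [m [/andP[p_ge2 p_le_k] p_le_m N_le n_le p_case]]] :=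
  hub_parameters n_ge k_ge2 k_le.
have p_ge2R : (2 : R) <= p%:R by rewrite (ler_nat R 2).
have n_leR : n%:R <= 4 * (p%:R * m%:R) :> R by rewrite -!natrM ler_nat.
have kp_ge0 : (0 : R) <= (k - p)%:R by rewrite ler0n.
apply: (hub_graph_instance (p := p) (m := m) (q := k - p)
          (B := Num.min (p%:R * m%:R / 8) (p%:R * Num.sqrt (p%:R * m%:R)))) => //.
- by lia.
- by lia.
- have : (0 : R) <= m%:R by rewrite ler0n.
  nra.
- by have := hub_bound_ge R n_le p_case; lra.
- by move=> a a_range; apply: hub_term_sum_ge => //; [lia | rewrite -natrM ler_nat].
Qed.

Lemma sparse_instance (R : realType) (n k : nat) : (2 <= k)%N -> (k <= n < 2 * k)%N ->
  lower_bound_instance (1 : R) 1 8^-1 352^-1 n k.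
Proof.
move=> k_ge2 /andP[k_le n_lt].
have k_ge2R : (2 : R) <= k%:R by rewrite (ler_nat R 2).
have n_ltR : n%:R < 2 * k%:R :> R by rewrite -natrM ltr_nat.
have min_le_n : Num.min (k%:R * Num.sqrt n%:R) n%:R <= n%:R :> R.
  by rewrite ge_min lexx orbT.
apply: (hub_graph_instance (p := 0) (m := 1) (q := k) (B := 0)) => //.
- by rewrite mul1r; lra.
- by rewrite addr0; lra.
- by move=> a _; rewrite big_ord0.
Qed.

Theorem theorem6p2 (R : realType) :
  exists c1 c2 c3 c4 : R,
    [/\ 0 < c1, 0 < c2, 0 < c3 & 0 < c4] /\
    exists n0 : nat, forall n k : nat,
      (n0 <= n)%N -> (2 <= k)%N -> (k <= n)%N ->
      exists (N : nat) (e : rel 'I_N),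
        (N <= n)%N /\ simple_graph e /\
        [/\
            (* c1 k <= OPT *)
            (forall th : 'I_N -> R, feasible e th -> c1 * k%:R <= l1norm th),
            (* OPT <= c2 k *)
            (exists th : 'I_N -> R, feasible e th /\ l1norm th <= c2 * k%:R),
            (* OPT^stable >= c3 n *)
            (forall th : 'I_N -> R, stable e th -> c3 * n%:R <= l1norm th) &
            (* every persuasive scheme, any finite signal space, costs >= ... *)
            (forall (m : nat) (sig : 'I_m -> R)
                    (phi : {perm 'I_N} -> {ffun 'I_N -> 'I_m} -> R),
                valid_scheme sig phi -> persuasive e sig phi ->
                c4 * Num.min (k%:R * Num.sqrt (n%:R)) n%:R <= cost sig phi)].
Proof.
exists 1, 1, 8^-1, 352^-1; split; first by split; rewrite ?ltr01 ?invr_gt0 ?ltr0n.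
exists 256%N => n k n_ge k_ge2 k_le.
case: (leqP (2 * k) n) => [k_le_half|n_lt].
  exact: dense_instance.
by apply: sparse_instance; rewrite // k_le.
Qed.
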